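(* Let $Q$ be a quiver and let $C\subseteq\Bbbk Q$ be a monomial subcoalgebra. Every finitely generated right coideal of $C$ is contained in a right coideal of $C$ admitting a finite linear basis whose elements are all paths in $C$.
   Context: $\Bbbk$ is a field. The path coalgebra $\Bbbk Q$ has basis all paths of $Q$ (including trivial paths, identified with vertices), with $\Delta(p)=\sum_{xy=p}x\otimes y$ ($xy$ = concatenation) and $\varepsilon(p)=1$ if $p$ is trivial, $0$ otherwise. A subcoalgebra $C\subseteq\Bbbk Q$ is monomial if it contains all vertices and arrows of $Q$ and has a linear basis consisting of paths. A right coideal of $C$ is a subspace $I$ with $\Delta(I)\subseteq I\otimes C$; it is finitely generated if it is the smallest right coideal containing some finite set. *)

From mathcomp Require Import all_boot all_algebra.
From Stdlib Require List.
From Stdlib Require Import ClassicalEpsilon.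
Set Implicit Arguments. Unset Strict Implicit. Unset Printing Implicit Defensive.
Import GRing.Theory.
Local Open Scope ring_scope.

Record quiver := Quiver {
  qV : Type;
  qA : Type;
  qsrc : qA -> qV;
  qtgt : qA -> qV }.

Section PathCoalgebra.
Variables (K : fieldType) (Q : quiver).

(* A raw path: a starting vertex and a list of arrows, traversed in order.
   The trivial path at v is (v, [::]). *)
Definition rpath := (qV Q * seq (qA Q))%type.

Fixpoint valid_from (v : qV Q) (s : seq (qA Q)) : Prop :=
  match s with
  | [::] => True
  | a :: s' => qsrc a = v /\ valid_from (qtgt a) s'
  end.

Fixpoint end_from (v : qV Q) (s : seq (qA Q)) : qV Q :=
  match s with
  | [::] => v
  | a :: s' => end_from (qtgt a) s'
  end.

Definition is_path (p : rpath) : Prop := valid_from p.1 p.2.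
Definition pstart (p : rpath) : qV Q := p.1.
Definition pend (p : rpath) : qV Q := end_from p.1 p.2.

(* concatenation xy: first x, then y (meaningful when pend x = pstart y) *)
Definition pconcat (x y : rpath) : rpath := (x.1, x.2 ++ y.2).

(* Vectors: functions on raw paths; elements of kQ are the finitely
   supported ones vanishing outside genuine paths (coordinates in the
   path basis). *)
Definition vec := rpath -> K.
Definition tvec := (rpath * rpath)%type -> K.

Definition in_kQ (f : vec) : Prop :=
  (exists s : seq rpath, forall p, f p <> 0 -> List.In p s) /\
  (forall p, ~ is_path p -> f p = 0).

Definition pvec (p : rpath) : vec :=
  fun q => if excluded_middle_informative (q = p) then 1 else 0.

(* comultiplication: Delta(p) = sum_{xy = p} x (x) y, extended linearly;
   coordinates of Delta f in the basis {x (x) y} of kQ (x) kQ *)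
Definition Delta (f : vec) : tvec :=
  fun xy => if excluded_middle_informative (pend xy.1 = pstart xy.2)
            then f (pconcat xy.1 xy.2) else 0.

Definition lincomb (l : seq (K * vec)) : vec :=
  fun p => foldr (fun cv acc => cv.1 * cv.2 p + acc) 0 l.

Definition etensor (x y : vec) : tvec := fun pq => x pq.1 * y pq.2.

Definition tsum (l : seq (vec * vec)) : tvec :=
  fun pq => foldr (fun xy acc => etensor xy.1 xy.2 pq + acc) 0 l.

Definition subspace (W : vec -> Prop) : Prop :=
  (forall f, W f -> in_kQ f) /\ W (fun _ => 0) /\
  (forall f g, W f -> W g -> W (fun p => f p + g p)) /\
  (forall c f, W f -> W (fun p => c * f p)).

Definition vsubset (U W : vec -> Prop) : Prop := forall f, U f -> W f.

Definition in_tensor (U W : vec -> Prop) (t : tvec) : Prop :=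
  exists l : seq (vec * vec),
    (forall xy, List.In xy l -> U xy.1 /\ W xy.2) /\
    (forall pq, t pq = tsum l pq).

Definition Delta_sub (U W : vec -> Prop) : Prop :=
  forall f, U f -> in_tensor U W (Delta f).

Definition lin_indep (B : vec -> Prop) : Prop :=
  forall l : seq (K * vec),
    List.NoDup (map snd l) -> (forall cv, List.In cv l -> B cv.2) ->
    (forall p, lincomb l p = 0) -> forall cv, List.In cv l -> cv.1 = 0.

Definition is_basis (W : vec -> Prop) (B : vec -> Prop) : Prop :=
  vsubset B W /\ lin_indep B /\
  (forall f, W f -> exists l : seq (K * vec),
       (forall cv, List.In cv l -> B cv.2) /\ (forall p, f p = lincomb l p)).

Definition subcoalgebra (C : vec -> Prop) : Prop :=
  subspace C /\ Delta_sub C C.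

Definition monomial (C : vec -> Prop) : Prop :=
  subcoalgebra C /\
  (forall v : qV Q, C (pvec (v, [::]))) /\
  (forall a : qA Q, C (pvec (qsrc a, [:: a]))) /\
  (exists B : vec -> Prop, is_basis C B /\
     forall f, B f -> exists p, is_path p /\ f = pvec p).

Definition right_coideal (C I : vec -> Prop) : Prop :=
  subspace I /\ vsubset I C /\ Delta_sub I C.

Definition fg_right_coideal (C I : vec -> Prop) : Prop :=
  right_coideal C I /\
  exists S : seq vec,
    (forall f, List.In f S -> I f) /\
    (forall J, right_coideal C J -> (forall f, List.In f S -> J f) -> vsubset I J).

End PathCoalgebra.

(* Proof idea: a finitely generated right coideal lies in the right coideal
   generated by finitely many elements of C, whose supports are finite sets of
   paths.  Because C has a basis of paths, each of these paths spans a line in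
   C, and because C is a subcoalgebra so do all of their prefixes and
   suffixes.  The span J of the prefix closure of these paths is then a right
   coideal of C, since [Delta p = sum_(p = xy) x (x) y] has every left factor
   a prefix of p; J contains the generators and hence the whole coideal. *)
From mathcomp Require Import all_boot all_algebra.
From Stdlib Require List.
From Stdlib Require Import ClassicalEpsilon FunctionalExtensionality.
Set Implicit Arguments. Unset Strict Implicit. Unset Printing Implicit Defensive.
Import GRing.Theory.
Local Open Scope ring_scope.

Lemma cat_cancelr (T : Type) (a b c : seq T) : a ++ c = b ++ c -> a = b.
Proof.
move=> E; have Hs : size a = size b.
  by move/(congr1 size): E; rewrite !size_cat => /addIn.
by rewrite -(take_size_cat c (erefl (size a))) E take_size_cat.
Qed.

Lemma cat_cancell (T : Type) (a b c : seq T) : a ++ b = a ++ c -> b = c.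
Proof. by move=> E; rewrite -(drop_size_cat b (erefl (size a))) E drop_size_cat. Qed.

Section PathSpans.
Variables (K : fieldType) (Q : quiver).
Implicit Types (p q x y : rpath Q) (f g : vec K Q) (ps : seq (rpath Q)).

Lemma pvec_id p : pvec K p p = 1.
Proof. by rewrite /pvec; case: excluded_middle_informative. Qed.

Lemma pvec_neq p q : q <> p -> pvec K p q = 0.
Proof. by rewrite /pvec; case: excluded_middle_informative. Qed.

Lemma pvec_nz_eq p q : pvec K p q <> 0 -> q = p.
Proof. by rewrite /pvec; case: excluded_middle_informative => // _ []. Qed.

Definition supported_on f ps := forall p, f p <> 0 -> List.In p ps.

Lemma lincomb_nz (l : seq (K * vec K Q)) p :
  lincomb l p <> 0 -> exists2 cv, List.In cv l & cv.2 p <> 0.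
Proof.
elim: l => [|cv l IH] //=; rewrite /lincomb /= -/(lincomb l p) => Hnz.
have [Hcv|Hcv] := eqVneq (cv.2 p) 0; last by exists cv; [left | apply/eqP].
have [|cv' Hin Hcv'] := IH; first by move=> E; apply: Hnz; rewrite Hcv E mulr0 addr0.
by exists cv'; first right.
Qed.

Lemma lincomb_supported f ps : supported_on f ps ->
  exists l : seq (K * vec K Q),
    (forall cv, List.In cv l -> exists p, List.In p ps /\ cv.2 = pvec K p) /\
    (forall q, f q = lincomb l q).
Proof.
elim: ps f => [|p ps IH] f Hf.
  exists [::]; split=> // q; rewrite /lincomb /=.
  by case: (eqVneq (f q) 0) => [->|/eqP H] //; case: (Hf _ H).
pose g q := f q - f p * pvec K p q.
have Hg : supported_on g ps.
  move=> q; rewrite /g.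
  case: (excluded_middle_informative (q = p)) => [->|Hqp].
    by rewrite pvec_id mulr1 subrr.
  by rewrite pvec_neq // mulr0 subr0 => /Hf /= [/esym|].
have [l [Hl Hgl]] := IH g Hg.
exists ((f p, pvec K p) :: l); split.
  move=> cv /= [<-|Hcv]; first by exists p; split=> //; left.
  by have [p' [H1 H2]] := Hl _ Hcv; exists p'; split=> //; right.
by move=> q; rewrite /lincomb /= -/(lincomb l q) -Hgl /g addrC subrK.
Qed.

Lemma subspace_lincomb (W : vec K Q -> Prop) (l : seq (K * vec K Q)) :
  subspace W -> (forall cv, List.In cv l -> W cv.2) -> W (lincomb l).
Proof.
move=> [_ [W0 [WD WZ]]]; elim: l => [|cv l IH] Hl; first exact: W0.
apply: (WD (fun p => cv.1 * cv.2 p) (lincomb l)); first by apply/WZ/Hl; left.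
by apply: IH => cv' H; apply: Hl; right.
Qed.

Lemma subspace_supported (W : vec K Q -> Prop) f ps : subspace W ->
  (forall p, List.In p ps -> W (pvec K p)) -> supported_on f ps -> W f.
Proof.
move=> HW Hps Hf; have [l [Hl Hfl]] := lincomb_supported Hf.
rewrite (functional_extensionality _ _ Hfl).
by apply: subspace_lincomb => // cv /Hl [p [Hp ->]]; apply: Hps.
Qed.

Lemma lincomb_pvec_coord (l : seq (K * vec K Q)) cv p :
  List.NoDup (map snd l) -> (forall cv, List.In cv l -> exists p', cv.2 = pvec K p') ->
  List.In cv l -> cv.2 = pvec K p -> lincomb l p = cv.1.
Proof.
elim: l => [|cv0 l IH] //= /List.NoDup_cons_iff [Hfresh Hnd] Hl Hin Hcv.
have Hmap cv' : List.In cv' l -> List.In cv'.2 (map snd l).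
  by elim: (l) => [|? ? IHl] //= [->|/IHl]; [left | right].
rewrite /lincomb /= -/(lincomb l p).
have [p0 E0] := Hl cv0 (or_introl erefl).
case: Hin => [Ecv|Hin].
  subst cv0; rewrite Hcv pvec_id mulr1.
  suff -> : lincomb l p = 0 by rewrite addr0.
  have [//|/eqP /lincomb_nz [cv' Hin' Hnz]] := eqVneq (lincomb l p) 0.
  exfalso; apply: Hfresh.
  have [p' E'] := Hl cv' (or_intror Hin').
  move: Hnz; rewrite E' => /pvec_nz_eq Ep.
  by rewrite Hcv Ep -E'; apply: Hmap.
rewrite IH //; last by move=> cv' H; apply: Hl; right.
rewrite E0 pvec_neq ?mulr0 ?add0r // => Ep; apply: Hfresh.
by rewrite E0 -Ep -Hcv; apply: Hmap.
Qed.

Lemma lin_indep_pvecs (B : vec K Q -> Prop) :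
  (forall f, B f -> exists p, f = pvec K p) -> lin_indep B.
Proof.
move=> HB l Hnd Hl Hz cv Hcv; have [p Ep] := HB _ (Hl cv Hcv).
rewrite -(lincomb_pvec_coord Hnd _ Hcv Ep) //.
by move=> cv' /Hl /HB.
Qed.

Definition tsupported_on (t : tvec K Q) (L : seq (rpath Q * rpath Q)) :=
  forall xy, t xy <> 0 -> List.In xy L.

Lemma in_tensor_supported (U W : vec K Q -> Prop) (t : tvec K Q) L :
  (forall c f, U f -> U (fun p => c * f p)) ->
  (forall xy, List.In xy L -> U (pvec K xy.1) /\ W (pvec K xy.2)) ->
  tsupported_on t L -> in_tensor U W t.
Proof.
move=> UZ; elim: L t => [|[x y] L IH] t HL Ht.
  exists [::]; split=> // pq; rewrite /tsum /=.
  by case: (eqVneq (t pq) 0) => [->|/eqP H] //; case: (Ht _ H).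
have pvec_pair_neq pq : pq <> (x, y) -> pvec K x pq.1 * pvec K y pq.2 = 0.
  case: pq => a b /= Hne.
  case: (excluded_middle_informative (a = x)) => [Ea|Ea]; last by rewrite pvec_neq ?mul0r.
  case: (excluded_middle_informative (b = y)) => [Eb|Eb]; last by rewrite (pvec_neq Eb) mulr0.
  by case: Hne; rewrite Ea Eb.
pose t' pq := t pq - t (x, y) * (pvec K x pq.1 * pvec K y pq.2).
have Ht' : tsupported_on t' L.
  move=> pq; rewrite /t'.
  case: (excluded_middle_informative (pq = (x, y))) => [->|Hne].
    by rewrite /= !pvec_id !mulr1 subrr.
  by rewrite pvec_pair_neq // mulr0 subr0 => /Ht /= [/esym|].
have [l [Hl Ht'l]] := IH t' (fun xy H => HL xy (or_intror H)) Ht'.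
have [Ux Wy] := HL (x, y) (or_introl erefl).
exists ((fun p => t (x, y) * pvec K x p, pvec K y) :: l); split.
  by move=> xy /= [<-|H]; [split=> //; apply: UZ | apply: Hl].
move=> pq; rewrite /tsum /= -/(tsum l pq) -Ht'l /t' /etensor /=.
by rewrite -mulrA addrC subrK.
Qed.

Lemma in_tensor_slice_r (U W : vec K Q -> Prop) t x : subspace W ->
  in_tensor U W t -> W (fun q => t (x, q)).
Proof.
move=> HW [l [Hl Ht]].
have -> : (fun q => t (x, q)) = lincomb (map (fun xy => (xy.1 x, xy.2)) l).
  apply: functional_extensionality => q; rewrite Ht.
  by elim: (l) => [|xy l' IH] //; rewrite /tsum /lincomb /= -/(tsum l' _) IH.
apply: subspace_lincomb => //; elim: l Hl {Ht} => [|xy l IH] Hl cv //= [<-|H].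
  by have [] := Hl xy (or_introl erefl).
by apply: IH H => xy' H'; apply: Hl; right.
Qed.

Lemma in_tensor_slice_l (U W : vec K Q -> Prop) t y : subspace U ->
  in_tensor U W t -> U (fun q => t (q, y)).
Proof.
move=> HU [l [Hl Ht]].
have -> : (fun q => t (q, y)) = lincomb (map (fun xy => (xy.2 y, xy.1)) l).
  apply: functional_extensionality => q; rewrite Ht.
  elim: (l) => [|xy l' IH] //; rewrite /tsum /lincomb /= -/(tsum l' _) IH.
  by rewrite /etensor /= mulrC.
apply: subspace_lincomb => //; elim: l Hl {Ht} => [|xy l IH] Hl cv //= [<-|H].
  by have [] := Hl xy (or_introl erefl).
by apply: IH H => xy' H'; apply: Hl; right.
Qed.

Lemma pconcat_injl x y q : pconcat q y = pconcat x y -> q = x.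
Proof. by case: q x => q1 q2 [x1 x2] [-> /cat_cancelr ->]. Qed.

Lemma pconcat_injr x y q : pstart q = pstart y -> pconcat x q = pconcat x y -> q = y.
Proof. by case: q y => q1 q2 [y1 y2] /= -> [/cat_cancell ->]. Qed.

Lemma Delta_pvec_concat_l x y : pend x = pstart y ->
  (fun q => Delta (pvec K (pconcat x y)) (q, y)) = pvec K x.
Proof.
move=> Exy; apply: functional_extensionality => q; rewrite /Delta /=.
case: (excluded_middle_informative (pend q = pstart y)) => [Eq|Eq] /=; last first.
  by rewrite pvec_neq // => Eqx; apply: Eq; rewrite Eqx.
case: (excluded_middle_informative (q = x)) => [->|Hqx]; first by rewrite !pvec_id.
by rewrite !pvec_neq // => /pconcat_injl.
Qed.

Lemma Delta_pvec_concat_r x y : pend x = pstart y ->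
  (fun q => Delta (pvec K (pconcat x y)) (x, q)) = pvec K y.
Proof.
move=> Exy; apply: functional_extensionality => q; rewrite /Delta /=.
case: (excluded_middle_informative (pend x = pstart q)) => [Eq|Eq] /=; last first.
  by rewrite pvec_neq // => Eqy; apply: Eq; rewrite Eqy.
case: (excluded_middle_informative (q = y)) => [->|Hqy]; first by rewrite !pvec_id.
by rewrite !pvec_neq // => E; apply/Hqy/(pconcat_injr _ E); rewrite -Eq.
Qed.

Lemma subcoalgebra_pconcat (C : vec K Q -> Prop) x y : subcoalgebra C ->
  pend x = pstart y -> C (pvec K (pconcat x y)) -> C (pvec K x) /\ C (pvec K y).
Proof.
move=> [HC HD] Exy /HD Ht; split.
  by rewrite -(Delta_pvec_concat_l Exy); apply: in_tensor_slice_l Ht.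
by rewrite -(Delta_pvec_concat_r Exy); apply: in_tensor_slice_r Ht.
Qed.

Definition ptake k p : rpath Q := (p.1, take k p.2).
Definition pdrop k p : rpath Q := (pend (ptake k p), drop k p.2).

Lemma pconcat_take_drop k p : pconcat (ptake k p) (pdrop k p) = p.
Proof. by rewrite /pconcat /= cat_take_drop; case: p. Qed.

Lemma ptake_size p : ptake (size p.2) p = p.
Proof. by rewrite /ptake take_size; case: p. Qed.

Lemma ptake_ptake k j p : ptake k (ptake j p) = ptake (minn k j) p.
Proof. by rewrite /ptake take_min. Qed.

Lemma pconcat_split x y : pend x = pstart y ->
  ptake (size x.2) (pconcat x y) = x /\ pdrop (size x.2) (pconcat x y) = y.
Proof.
case: x y => x1 x2 [y1 y2]; rewrite /pend /pstart /ptake /pdrop /pconcat /= => <-.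
by rewrite /pend /ptake /= !take_size_cat // drop_size_cat.
Qed.

Lemma is_path_ptake k p : is_path p -> is_path (ptake k p).
Proof.
case: p => v s; rewrite /is_path /ptake /=.
by elim: s v k => [|a s IH] v [|k] //= [-> /IH].
Qed.

Lemma subcoalgebra_ptake (C : vec K Q -> Prop) k p : subcoalgebra C ->
  C (pvec K p) -> C (pvec K (ptake k p)) /\ C (pvec K (pdrop k p)).
Proof.
by move=> HC Hp; apply: subcoalgebra_pconcat; rewrite ?pconcat_take_drop.
Qed.

Definition prefixes p := List.map (ptake^~ p) (List.seq 0 (size p.2).+1).
Definition prefix_closure ps := List.flat_map prefixes ps.

Lemma in_prefix_closure ps x :
  List.In x (prefix_closure ps) <-> exists p k, List.In p ps /\ x = ptake k p.
Proof.
split.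
  by move=> /List.in_flat_map [p [Hp /List.in_map_iff [k [<- _]]]]; exists p, k.
move=> [p [k [Hp ->]]]; apply/List.in_flat_map; exists p; split=> //.
apply/List.in_map_iff; exists (minn k (size p.2)); split.
  by rewrite /ptake take_min take_size.
by apply/List.in_seq; split; [apply/leP | apply/ltP; rewrite ltnS geq_minr].
Qed.

Lemma prefix_closure_sub ps p : List.In p ps -> List.In p (prefix_closure ps).
Proof. by move=> Hp; apply/in_prefix_closure; exists p, (size p.2); rewrite ptake_size. Qed.

Lemma prefix_closure_closed ps x k :
  List.In x (prefix_closure ps) -> List.In (ptake k x) (prefix_closure ps).
Proof.
move=> /in_prefix_closure [p [j [Hp ->]]]; apply/in_prefix_closure.
by exists p, (minn k j); rewrite ptake_ptake.
Qed.

Lemma prefix_closure_paths (C : vec K Q -> Prop) ps : subcoalgebra C ->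
  (forall p, List.In p ps -> is_path p /\ C (pvec K p)) ->
  forall x, List.In x (prefix_closure ps) -> is_path x /\ C (pvec K x).
Proof.
move=> HC Hps x /in_prefix_closure [p [k [/Hps [Pp Cp] ->]]].
by split; [apply: is_path_ptake | case: (subcoalgebra_ptake k HC Cp)].
Qed.

Definition path_span ps : vec K Q -> Prop := supported_on^~ ps.

Lemma path_span_pvec ps p : List.In p ps -> path_span ps (pvec K p).
Proof. by move=> Hp q /pvec_nz_eq ->. Qed.

Lemma path_span_subspace ps : (forall p, List.In p ps -> is_path p) ->
  subspace (path_span ps).
Proof.
move=> Hps; split.
  move=> f Hf; split; first by exists ps.
  move=> p Np; have [//|/eqP /Hf /Hps Pp] := eqVneq (f p) 0.
  by case: Np.
split; first by [].
split.
  move=> f g Hf Hg p Hfg; have [Ef|/eqP /Hf //] := eqVneq (f p) 0.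
  by apply: Hg => Eg; apply: Hfg; rewrite Ef Eg addr0.
by move=> c f Hf p Hcf; apply: Hf => E; apply: Hcf; rewrite E mulr0.
Qed.

Lemma path_span_basis ps :
  is_basis (path_span ps) (fun f => exists p, List.In p ps /\ f = pvec K p).
Proof.
split; first by move=> f [p [Hp ->]]; apply: path_span_pvec.
split; first by apply: lin_indep_pvecs => f [p [_ ->]]; exists p.
by move=> f /lincomb_supported [l [Hl Hfl]]; exists l.
Qed.

Definition splittings p :=
  List.map (fun k => (ptake k p, pdrop k p)) (List.seq 0 (size p.2).+1).

(* The support of [Delta f] consists of the splittings of the paths in the
   support of [f]; their left factors are prefixes, hence stay in the span. *)
Lemma path_span_right_coideal (C : vec K Q -> Prop) ps : subcoalgebra C ->
  (forall p, List.In p ps -> is_path p /\ C (pvec K p)) ->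
  (forall p k, List.In p ps -> List.In (ptake k p) ps) ->
  right_coideal C (path_span ps).
Proof.
move=> HC Hps Hpref.
have HJ := path_span_subspace (fun p Hp => (Hps p Hp).1).
split=> //; split.
  by move=> f; apply: (subspace_supported HC.1) => p /Hps [].
move=> f Hf; apply: (in_tensor_supported (L := List.flat_map splittings ps)).
- by move=> c g; apply: HJ.2.2.2.
- move=> xy /List.in_flat_map [p [Hp /List.in_map_iff [k [<- _]]]] /=.
  split; first by apply/path_span_pvec/Hpref.
  by case: (subcoalgebra_ptake k HC (Hps p Hp).2).
- move=> [x y]; rewrite /Delta /=.
  case: (excluded_middle_informative (pend x = pstart y)) => //= Exy /Hf Hp.
  apply/List.in_flat_map; exists (pconcat x y); split=> //.
  apply/List.in_map_iff; exists (size x.2).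
  have [-> ->] := pconcat_split Exy; split=> //.
  apply/List.in_seq; split; first exact/leP.
  by apply/ltP; rewrite ltnS size_cat leq_addr.
Qed.

Lemma monomial_supported_paths (C : vec K Q -> Prop) f p : monomial C ->
  C f -> f p <> 0 -> is_path p /\ C (pvec K p).
Proof.
move=> [[HC _] [_ [_ [B [[BC [_ Bspan]] Bpaths]]]]] Cf Hfp; split.
  case: (excluded_middle_informative (is_path p)) => // Np.
  by case: Hfp; apply: (HC.1 f Cf).2.
have [l [Hl Hfl]] := Bspan f Cf; rewrite Hfl in Hfp.
have [cv Hcv Hnz] := lincomb_nz Hfp.
have [p' [_ Ecv]] := Bpaths _ (Hl cv Hcv).
by move: Hnz; rewrite Ecv => /pvec_nz_eq ->; rewrite -Ecv; apply/BC/Hl.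
Qed.

Lemma supported_on_common (P : rpath Q -> Prop) (S : seq (vec K Q)) :
  (forall f, List.In f S -> (exists ps, supported_on f ps) /\
                            forall p, f p <> 0 -> P p) ->
  exists ps, (forall f, List.In f S -> supported_on f ps) /\
             (forall p, List.In p ps -> P p).
Proof.
elim: S => [|f S IH] HS; first by exists [::].
have [ps [HSps Pps]] := IH (fun g Hg => HS g (or_intror Hg)).
have [[s Hs] Pf] := HS f (or_introl erefl).
pose Pb p := if excluded_middle_informative (P p) then true else false.
exists (List.filter Pb s ++ ps)%list; split.
  move=> g [<-|Hg] p Hp; apply: List.in_or_app; last by right; apply: HSps Hp.
  left; apply/List.filter_In; split; first exact: Hs.
  by rewrite /Pb; case: excluded_middle_informative => // Np; case: Np; apply: Pf.
move=> p Hp; have [/List.filter_In [_]|/Pps //] := List.in_app_or _ _ _ Hp.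
by rewrite /Pb; case: excluded_middle_informative.
Qed.

End PathSpans.

Theorem lemma4p9 (K : fieldType) (Q : quiver) (C : vec K Q -> Prop) :
  monomial C ->
  forall I : vec K Q -> Prop, fg_right_coideal C I ->
  exists J : vec K Q -> Prop,
    right_coideal C J /\ vsubset I J /\
    exists ps : seq (rpath Q),
      is_basis J (fun f => exists p, List.In p ps /\ f = pvec K p) /\
      (forall p, List.In p ps -> is_path p /\ C (pvec K p)).
Proof.
move=> HCmon I [[_ [IC _]] [S [SI Imin]]].
have HC : subcoalgebra C := HCmon.1.
have Sfin f : List.In f S -> (exists ps, supported_on f ps) /\
                             forall p, f p <> 0 -> is_path p /\ C (pvec K p).
  move=> /SI /IC Cf; split; first exact: (HC.1.1 f Cf).1.
  by move=> p; apply: monomial_supported_paths.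
have [s [Ss Ps]] := supported_on_common Sfin.
have Pclosure := prefix_closure_paths HC Ps.
have HJ : right_coideal C (path_span (prefix_closure s)).
  by apply: path_span_right_coideal => // p k; apply: prefix_closure_closed.
exists (path_span (prefix_closure s)); split=> //; split.
  by apply: Imin => // f Hf p /(Ss f Hf) /prefix_closure_sub.
by exists (prefix_closure s); split; [apply: path_span_basis|].
Qed.
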